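(* Let $\kappa \geq 2$ be an integer. If there exists a finite projective plane of order $\kappa$, then there exists a complete set of $\kappa - 1$ mutually projective Latin squares of order $\kappa$.
   Context: A geometry is a pair $(\mathcal{P},\mathcal{L})$ of disjoint sets, the elements of $\mathcal{L}$ (lines) being subsets of $\mathcal{P}$ (points), such that every two distinct points lie in exactly one common line and every line contains at least two points. A finite projective plane is a finite geometry in which any two different lines intersect and which contains at least four points no three of which lie on a common line. In a finite projective plane all lines have the same number $k$ of points; the order of the plane is $\kappa = k - 1$. A Latin square of order $\kappa$ is a $\kappa\times\kappa$ matrix with entries from $\{1,\dots,\kappa\}$ in which each symbol occurs exactly once in each row and each column. Two Latin squares $L_1=[l^{(1)}_{ij}]$ and $L_2=[l^{(2)}_{ij}]$ of order $\kappa$ are called projective if both have all diagonal entries equal to $1$ and, for every row index $r$ and every row index $s$, there is exactly one column index $c$ with $l^{(1)}_{rc} = l^{(2)}_{sc}$. A family of Latin squares of order $\kappa$ is a set of mutually projective Latin squares (MPLS) if its members are pairwise projective; such a set is complete if it contains $\kappa - 1$ Latin squares. *)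

From mathcomp Require Import all_boot all_order all_algebra.
Set Implicit Arguments. Unset Strict Implicit. Unset Printing Implicit Defensive.

Definition is_geometry (P : finType) (L : {set {set P}}) : Prop :=
  (forall p q : P, p != q -> exists! l : {set P}, [/\ l \in L, p \in l & q \in l]) /\
  (forall l, l \in L -> 2 <= #|l|).

Definition is_projective_plane (P : finType) (L : {set {set P}}) : Prop :=
  [/\ is_geometry L,
      (forall l m, l \in L -> m \in L -> l != m -> exists p, p \in l /\ p \in m)
    & exists S : {set P}, #|S| = 4 /\ (forall l, l \in L -> #|S :&: l| <= 2)].

Definition projective_plane_of_order (kappa : nat) (P : finType) (L : {set {set P}}) : Prop :=
  is_projective_plane L /\ (forall l, l \in L -> #|l| = kappa.+1).

Definition latin_square (kappa : nat) (A : 'M[nat]_kappa) : Prop :=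
  [/\ (forall i j, 1 <= A i j <= kappa),
      (forall i s, 1 <= s <= kappa -> exists! j, A i j = s)
    & (forall j s, 1 <= s <= kappa -> exists! i, A i j = s)].

Definition projective_pair (kappa : nat) (A B : 'M[nat]_kappa) : Prop :=
  (forall i, A i i = 1) /\ (forall i, B i i = 1) /\
  (forall r s : 'I_kappa, exists! c, A r c = B s c).

Definition MPLS (kappa : nat) (F : seq 'M[nat]_kappa) : Prop :=
  [/\ uniq F,
      (forall A, A \in F -> latin_square A)
    & (forall A B, A \in F -> B \in F -> A != B -> projective_pair A B)].

Definition complete_MPLS (kappa : nat) (F : seq 'M[nat]_kappa) : Prop :=
  MPLS F /\ size F = kappa - 1.

From mathcomp Require Import all_boot all_order all_algebra perm.
Set Implicit Arguments. Unset Strict Implicit. Unset Printing Implicit Defensive.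

(* Removing a line li from the plane leaves an affine plane of order kappa whose
   parallel classes are the kappa + 1 points of li.  Fix two of them, V
   (verticals) and H (horizontals), and label the lines of each class by
   'I_kappa.  For each of the kappa - 1 other points Z of li, let the (r, c)
   entry of a square be one plus the label of the horizontal through the point
   where the r-th line of class Z meets the c-th vertical.  Since two lines of different
   classes meet in exactly one affine point, fixing any two of the three labels
   of a point determines the third, so each square is Latin; and rows r of the
   Z-square and s of the Z'-square agree exactly in the column of the vertical
   through the intersection of the r-th Z-line with the s-th Z'-line.  Labelling
   all classes but H through one horizontal h, and the horizontals through a
   vertical meeting h at a point with label 0, puts 1 on every diagonal. *)

Lemma ex1_iff (T : Type) (A B : T -> Prop) :
  (exists! x, A x) -> (forall x, A x <-> B x) -> exists! x, B x.
Proof.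
move=> [x [Ax Auniq]] AB; exists x; split; first exact/AB.
by move=> y /AB; apply: Auniq.
Qed.

Lemma exists_ord_param (T : finType) (A : {set T}) (n : nat) (a : T) :
  #|A| = n.+1 -> a \in A ->
  exists2 e : 'I_n.+1 -> T, injective e
    & e ord0 = a /\ forall y, y \in A <-> exists i, e i = y.
Proof.
move=> cardA aA.
have sizeA : size (enum A) = n.+1 by rewrite -cardE.
have ia : index a (enum A) < n.+1 by rewrite -sizeA index_mem mem_enum.
pose s : 'S_n.+1 := tperm ord0 (Ordinal ia).
exists (fun i => nth a (enum A) (s i)); last split.
- move=> i j /eqP; rewrite nth_uniq ?sizeA ?enum_uniq //.
  by move=> /eqP /val_inj /perm_inj.
- by rewrite tpermL nth_index ?mem_enum.
- move=> y; split=> [yA | [i <-]]; last by rewrite -mem_enum mem_nth ?sizeA.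
  have iy : index y (enum A) < n.+1 by rewrite -sizeA index_mem mem_enum.
  by exists (s^-1 (Ordinal iy))%g; rewrite permKV nth_index ?mem_enum.
Qed.

Definition ord_of (T : eqType) (n : nat) (e : 'I_n.+1 -> T) (y : T) : 'I_n.+1 :=
  odflt ord0 [pick i | e i == y].

Lemma ord_ofK (T : eqType) (n : nat) (e : 'I_n.+1 -> T) :
  injective e -> cancel e (ord_of e).
Proof.
move=> e_inj i; rewrite /ord_of; case: pickP => [j /eqP/e_inj // | /(_ i)].
by rewrite eqxx.
Qed.

Lemma exists_ord_succ (n s : nat) : 1 <= s <= n -> exists i : 'I_n, s = i.+1.
Proof. by case: s => // s s_le_n; exists (Ordinal s_le_n). Qed.

Lemma projective_pair_irrefl (n : nat) (A : 'M[nat]_n) : 1 < n -> ~ projective_pair A A.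
Proof.
move=> n_gt1 [_ [_ /(_ (Ordinal n_gt1) (Ordinal n_gt1)) [c [_ c_uniq]]]].
by have := congr1 val (etrans (esym (c_uniq (Ordinal (ltnW n_gt1)) erefl))
                               (c_uniq (Ordinal n_gt1) erefl)).
Qed.

Lemma MPLS_map (T : eqType) (n : nat) (sq : T -> 'M[nat]_n) (s : seq T) :
  1 < n -> uniq s -> {in s, forall x, latin_square (sq x)} ->
  {in s &, forall x y, x != y -> projective_pair (sq x) (sq y)} ->
  MPLS (map sq s).
Proof.
move=> n_gt1 s_uniq sq_latin sq_proj; split.
- rewrite map_inj_in_uniq // => x y xs ys sq_xy; apply/eqP/negP => /negP xy.
  by have := sq_proj x y xs ys xy; rewrite sq_xy => /(projective_pair_irrefl n_gt1).
- by move=> _ /mapP[x xs ->]; apply: sq_latin.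
- move=> _ _ /mapP[x xs ->] /mapP[y ys ->] sq_xy.
  by apply: sq_proj => //; apply: contraNneq sq_xy => ->.
Qed.

Section ProjectivePlane.

Variables (P : finType) (L : {set {set P}}).
Hypothesis line2 : forall p q : P, p != q ->
  exists! l : {set P}, [/\ l \in L, p \in l & q \in l].
Hypothesis lines_meet : forall l m, l \in L -> m \in L -> l != m ->
  exists p, p \in l /\ p \in m.

Lemma line_uniq (l m : {set P}) (p q : P) : l \in L -> m \in L -> p != q ->
  p \in l -> q \in l -> p \in m -> q \in m -> l = m.
Proof.
move=> lL mL pq pl ql pm qm; have [l0 [_ l0_uniq]] := line2 pq.
by rewrite -(l0_uniq l) ?(l0_uniq m).
Qed.

Lemma meet_uniq (l m : {set P}) (p q : P) : l \in L -> m \in L -> l != m ->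
  p \in l -> q \in l -> p \in m -> q \in m -> p = q.
Proof.
move=> lL mL lm pl ql pm qm; apply/eqP; apply: contraNT lm => pq.
exact/eqP/(line_uniq lL mL pq).
Qed.

Definition join (p q : P) : {set P} := odflt set0 [pick l in L | (p \in l) && (q \in l)].

Lemma joinP p q : p != q -> [/\ join p q \in L, p \in join p q & q \in join p q].
Proof.
move=> pq; rewrite /join; case: pickP => [l /andP[lL /andP[pl ql]] | no_line] //.
have [l [[lL pl ql] _]] := line2 pq.
by move: (no_line l); rewrite lL pl ql.
Qed.

Lemma join_eq (p q : P) (l : {set P}) : p != q -> l \in L -> p \in l -> q \in l ->
  join p q = l.
Proof. by move=> pq lL pl ql; case: (joinP pq) => jL pj qj; apply: (line_uniq jL lL pq). Qed.

Variable x0 : P.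

Definition meet (l m : {set P}) : P := odflt x0 [pick p in l :&: m].

Lemma meetC l m : meet l m = meet m l.
Proof. by rewrite /meet setIC. Qed.

Lemma meetP l m : l \in L -> m \in L -> l != m -> meet l m \in l /\ meet l m \in m.
Proof.
move=> lL mL lm; rewrite /meet; case: pickP => [p | no_point] /=.
  by rewrite inE => /andP.
have [p [pl pm]] := lines_meet lL mL lm.
by move: (no_point p); rewrite inE pl pm.
Qed.

Lemma meet_eq (l m : {set P}) (p : P) : l \in L -> m \in L -> l != m ->
  p \in l -> p \in m -> meet l m = p.
Proof.
move=> lL mL lm pl pm; have [ml mm] := meetP lL mL lm.
exact: (meet_uniq lL mL lm ml pl mm pm).
Qed.

Section AffinePart.

Variable li : {set P}.
Hypothesis liL : li \in L.

Lemma card_affine_line (l : {set P}) (m : nat) : l \in L -> l != li -> #|l| = m.+1 ->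
  #|l :\: li| = m.
Proof.
move=> lL lli card_l.
have l_at_li : l :&: li = [set meet l li].
  apply/setP=> x; rewrite !inE; have [ml mli] := meetP lL liL lli.
  apply/andP/eqP => [[xl xli] | ->] //.
  exact: (meet_uniq lL liL lli xl ml xli mli).
by move: (cardsID li l); rewrite l_at_li cards1 card_l add1n => -[].
Qed.

Lemma join_affine D X : D \in li -> X \notin li ->
  [/\ join D X \in L, D \in join D X, X \in join D X & join D X != li].
Proof.
move=> Dli Xli; have DX : D != X by apply: contraNneq Xli => <-.
by have [jL Dj Xj] := joinP DX; split=> //; apply: contraNneq Xli => <-.
Qed.

Lemma meet_affine (l m : {set P}) D E : l \in L -> m \in L -> l != li -> m != li ->
  D \in l -> D \in li -> E \in m -> E \in li -> D != E ->
  [/\ l != m, meet l m \in l, meet l m \in m & meet l m \notin li].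
Proof.
move=> lL mL lli mli Dl Dli Em Eli DE.
have lm : l != m.
  apply: contraNneq DE => lm; rewrite lm in Dl.
  exact/eqP/(meet_uniq mL liL mli Dl Em Dli Eli).
have [pl pm] := meetP lL mL lm; split=> //; apply/negP => pli.
move: DE; rewrite -(meet_uniq lL liL lli pl Dl pli Dli).
by rewrite (meet_uniq mL liL mli pm Em pli Eli) eqxx.
Qed.

Section Coordinates.

Variables (V H : P) (h v0 : {set P}) (k : nat) (f b : 'I_k.+1 -> P).
Hypotheses (Vli : V \in li) (Hli : H \in li) (VH : V != H).
Hypotheses (hL : h \in L) (Hh : H \in h) (hli : h != li).
Hypotheses (v0L : v0 \in L) (Vv0 : V \in v0) (v0li : v0 != li).
Hypotheses (f_inj : injective f) (f_onto : forall y, y \in h :\: li <-> exists i, f i = y).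
Hypotheses (b_inj : injective b) (b_onto : forall y, y \in v0 :\: li <-> exists i, b i = y).

(* The lines through a point D at infinity are labelled by their intersection
   with a transversal: v0 for D = H, the line h for every other D. *)
Definition transversal (D : P) : {set P} := if D == H then v0 else h.
Definition param (D : P) : 'I_k.+1 -> P := if D == H then b else f.

Definition coord (D X : P) : 'I_k.+1 := ord_of (param D) (meet (join D X) (transversal D)).

Definition pt (D : P) (i : 'I_k.+1) (E : P) (j : 'I_k.+1) : P :=
  meet (join D (param D i)) (join E (param E j)).

Lemma ptC D i E j : pt D i E j = pt E j D i.
Proof. exact: meetC. Qed.

Lemma param_spec D : D \in li ->
  [/\ transversal D \in L, D \notin transversal D, injective (param D)
    & forall y, y \in transversal D :\: li <-> exists i, param D i = y].
Proof.
move=> Dli; rewrite /transversal /param; case: eqP => [-> | /eqP DH]; split=> //.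
  by apply: contraNN VH => Hv0; apply/eqP/(meet_uniq v0L liL v0li Vv0 Hv0 Vli Hli).
by apply: contraNN DH => Dh; apply/eqP/(meet_uniq hL liL hli Dh Hh Dli Hli).
Qed.

Lemma param_in D i : D \in li -> param D i \in transversal D :\: li.
Proof. by case/param_spec=> _ _ _ onto; apply/onto; exists i. Qed.

Lemma param_affine D i : D \in li -> param D i \notin li.
Proof. by move=> /(param_in i)/setDP[]. Qed.

Lemma coord_on_line D X i : D \in li -> X \notin li -> X \in join D (param D i) ->
  coord D X = i.
Proof.
move=> Dli Xli Xl; have [tL Dt e_inj _] := param_spec Dli.
have [lL Dl el lli] := join_affine Dli (param_affine i Dli).
have DX : D != X by apply: contraNneq Xli => <-.
have lt : join D (param D i) != transversal D by apply: contraNneq Dt => <-.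
have /setDP[et _] := param_in i Dli.
by rewrite /coord (join_eq DX lL Dl Xl) (meet_eq lL tL lt el et) ord_ofK.
Qed.

Lemma coord_param D i : D \in li -> coord D (param D i) = i.
Proof.
move=> Dli; have eli := param_affine i Dli.
by have [_ _ el _] := join_affine Dli eli; apply: coord_on_line.
Qed.

Lemma param_coord D X : D \in li -> X \notin li -> exists i, X \in join D (param D i).
Proof.
move=> Dli Xli; have [tL Dt _ onto] := param_spec Dli.
have [lL Dl Xl lli] := join_affine Dli Xli.
have lt : join D X != transversal D by apply: contraNneq Dt => <-.
have [yl yt] := meetP lL tL lt.
have yli : meet (join D X) (transversal D) \notin li.
  by apply/negP => yli; move: yt; rewrite (meet_uniq lL liL lli yl Dl yli Dli) (negbTE Dt).
have [i ei] : exists i, param D i = meet (join D X) (transversal D).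
  by apply/onto; rewrite inE yli yt.
exists i; rewrite ei (join_eq _ lL Dl yl) //.
by apply: contraNneq yli => <-.
Qed.

Lemma coordP D X i : D \in li -> X \notin li ->
  coord D X = i <-> X \in join D (param D i).
Proof.
move=> Dli Xli; split=> [<- | ]; last exact: coord_on_line.
by have [j Xj] := param_coord Dli Xli; rewrite (coord_on_line Dli Xli Xj).
Qed.

Section TwoDirections.

Variables D E : P.
Hypotheses (Dli : D \in li) (Eli : E \in li) (DE : D != E).

Lemma pt_spec i j :
  [/\ pt D i E j \notin li, coord D (pt D i E j) = i & coord E (pt D i E j) = j].
Proof.
have [lL Dl _ lli] := join_affine Dli (param_affine i Dli).
have [mL Em _ mli] := join_affine Eli (param_affine j Eli).
have [_ pl pm pli] := meet_affine lL mL lli mli Dl Dli Em Eli DE.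
by split=> //; apply/coordP.
Qed.

Lemma pt_coord X : X \notin li -> pt D (coord D X) E (coord E X) = X.
Proof.
move=> Xli.
have [lL Dl _ lli] := join_affine Dli (param_affine (coord D X) Dli).
have [mL Em _ mli] := join_affine Eli (param_affine (coord E X) Eli).
have [lm _ _ _] := meet_affine lL mL lli mli Dl Dli Em Eli DE.
by apply: (meet_eq lL mL lm); apply/coordP.
Qed.

Lemma eq_coord2 X Y : X \notin li -> Y \notin li ->
  coord D X = coord D Y -> coord E X = coord E Y -> X = Y.
Proof.
by move=> Xli Yli eqD eqE; rewrite -(pt_coord Xli) -(pt_coord Yli) eqD eqE.
Qed.

End TwoDirections.

Lemma ex1_third_coord D E F i l : D \in li -> E \in li -> F \in li ->
  D != E -> D != F -> E != F -> exists! j, coord F (pt D i E j) = l.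
Proof.
move=> Dli Eli Fli DE DF EF; set X := pt D i F l.
have [Xli XD XF] : [/\ X \notin li, coord D X = i & coord F X = l].
  exact: pt_spec.
exists (coord E X); split.
  by rewrite -{1}XD pt_coord.
move=> j; have [Yli YD YE] := pt_spec Dli Eli DE i j.
move=> YF; rewrite -YE; congr (coord E _).
by apply: (eq_coord2 Dli Fli DF Xli Yli); rewrite ?XD ?YD ?XF ?YF.
Qed.

Lemma ex1_common_coord Z Z' r s : Z \in li -> Z' \in li ->
  Z != Z' -> Z != V -> Z' != V ->
  exists! c, coord H (pt Z r V c) = coord H (pt Z' s V c).
Proof.
move=> Zli Z'li ZZ' ZV Z'V; set Y := pt Z r Z' s.
have [Yli YZ YZ'] : [/\ Y \notin li, coord Z Y = r & coord Z' Y = s].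
  exact: pt_spec.
exists (coord V Y); split.
  by rewrite -{1}YZ -{1}YZ' !pt_coord.
move=> c; have [Xli XZ XV] := pt_spec Zli Vli ZV r c.
have [X'li X'Z' X'V] := pt_spec Z'li Vli Z'V s c.
move=> /(eq_coord2 Vli Hli VH Xli X'li (etrans XV (esym X'V))) XX'.
rewrite -XV; congr (coord V _).
by apply: (eq_coord2 Zli Z'li ZZ' Yli Xli); rewrite ?XZ ?YZ // XX' X'Z' YZ'.
Qed.

Hypothesis b0h : b ord0 \in h.

Lemma coord_diag Z r : Z \in li -> Z != V -> Z != H -> coord H (pt Z r V r) = ord0.
Proof.
move=> Zli ZV ZH.
have paramZ : param Z = f by rewrite /param (negbTE ZH).
have paramV : param V = f by rewrite /param (negbTE VH).
have paramH : param H = b by rewrite /param eqxx.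
have /setDP[fh fli] : f r \in h :\: li by apply/f_onto; exists r.
have -> : pt Z r V r = f r.
  by rewrite -{1}[r](coord_param r Zli) -{2}[r](coord_param r Vli) paramZ paramV pt_coord.
apply: coord_on_line => //; rewrite paramH.
have b0li : b ord0 \notin li by rewrite -paramH param_affine.
by rewrite (join_eq _ hL Hh b0h) //; apply: contraNneq b0li => <-.
Qed.

Definition sq (Z : P) : 'M[nat]_k.+1 := \matrix_(r, c) (coord H (pt Z r V c)).+1.

Lemma sq_latin Z : Z \in li -> Z != V -> Z != H -> latin_square (sq Z).
Proof.
move=> Zli ZV ZH; split=> [r c | r _ /exists_ord_succ[l ->] | c _ /exists_ord_succ[l ->]].
- by rewrite mxE ltn_ord.
- apply: (ex1_iff (ex1_third_coord r l Zli Vli Hli ZV ZH VH)) => c.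
  by rewrite mxE; split=> [-> // | [] /val_inj].
- have VZ : V != Z by rewrite eq_sym.
  apply: (ex1_iff (ex1_third_coord c l Vli Zli Hli VZ VH ZH)) => r.
  by rewrite mxE ptC; split=> [-> // | [] /val_inj].
Qed.

Lemma sq_projective Z Z' : Z \in li -> Z' \in li -> Z != Z' ->
  Z != V -> Z' != V -> Z != H -> Z' != H -> projective_pair (sq Z) (sq Z').
Proof.
move=> Zli Z'li ZZ' ZV Z'V ZH Z'H; split; [|split].
- by move=> i; rewrite mxE coord_diag.
- by move=> i; rewrite mxE coord_diag.
- move=> r s; apply: (ex1_iff (ex1_common_coord r s Zli Z'li ZZ' ZV Z'V)) => c.
  by rewrite !mxE; split=> [-> // | [] /val_inj].
Qed.

Lemma exists_complete_MPLS : 0 < k -> #|li| = k.+2 ->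
  exists F : seq 'M[nat]_k.+1, complete_MPLS F.
Proof.
move=> k_gt0 card_li; set dirs := li :\ V :\ H.
have dirsP Z : Z \in dirs -> [/\ Z \in li, Z != V & Z != H].
  by rewrite !inE => /and3P[].
exists (map sq (enum dirs)); split.
  apply: MPLS_map => //; first exact: enum_uniq.
    by move=> Z; rewrite mem_enum => /dirsP[]; apply: sq_latin.
  move=> Z Z'; rewrite !mem_enum => /dirsP[Zli ZV ZH] /dirsP[Z'li Z'V Z'H] ZZ'.
  exact: sq_projective.
have := cardsD1 V li; have := cardsD1 H (li :\ V).
rewrite !inE Vli Hli eq_sym VH card_li size_map -cardE => -> [->].
by rewrite subn1.
Qed.

End Coordinates.

End AffinePart.

End ProjectivePlane.

Theorem mainTheorem1 (kappa : nat) (hk : 2 <= kappa) :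
  (exists (P : finType) (L : {set {set P}}), projective_plane_of_order kappa L) ->
  exists F : seq 'M[nat]_kappa, complete_MPLS F.
Proof.
case: kappa hk => // k hk [P [L [[[line2 _] lines_meet [S [cardS S_lines]]] card_line]]].
have /card_gt1P[p [q [_ _ pq]]] : 1 < #|S| by rewrite cardS.
have [liL _ _] := joinP line2 pq; set li := join L p q in liL.
have /card_gt0P[Q /setDP[_ Qli]] : 0 < #|S :\: li|.
  move: (cardsID li S) (S_lines _ liL); rewrite cardS.
  by case: #|S :\: li| => // /[!addn0] ->.
have /card_gt1P[V [H [Vli Hli VH]]] : 1 < #|li| by rewrite card_line.
have [hL Hh Qh hli] := join_affine line2 Hli Qli.
have [v0L Vv0 Qv0 v0li] := join_affine line2 Vli Qli.
have affine_param l : l \in L -> l != li -> Q \in l ->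
    exists2 e : 'I_k.+1 -> P, injective e
      & e ord0 = Q /\ forall y, y \in l :\: li <-> exists i, e i = y.
  move=> lL lli Ql; apply: exists_ord_param; last by rewrite inE Qli.
  exact: (card_affine_line line2 lines_meet p liL lL lli (card_line _ lL)).
have [f f_inj [_ f_onto]] := affine_param _ hL hli Qh.
have [b b_inj [b0 b_onto]] := affine_param _ v0L v0li Qv0.
apply: (exists_complete_MPLS line2 lines_meet p liL Vli Hli VH hL Hh hli v0L Vv0 v0li
          f_inj f_onto b_inj b_onto) => //; first by rewrite b0.
exact: card_line.
Qed.
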